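(* Let $(R,\mathfrak{m})$ be a one-dimensional Cohen–Macaulay local ring. Let $I$ be a regular trace ideal with a principal reduction $(x)$, and let $J$ be a trace ideal with $I\subseteq J\subseteq\bar I$. If $J$ is stable, then $I=J$.
   Context: An ideal is regular if it contains a nonzerodivisor. A principal reduction of $I$ is a principal ideal $(x)\subseteq I$ with $xI^n=I^{n+1}$ for some $n$. For an $R$-module $N$, $\operatorname{tr}(N)$ is the image of $N\otimes_R\operatorname{Hom}_R(N,R)\to R$; an ideal is a trace ideal if it equals $\operatorname{tr}(N)$ for some $N$. $\bar I$ is the integral closure of $I$. $Q(R)$ is the total quotient ring; for a regular ideal $J$, $B_R(J)=\bigcup_{n>0}(J^n:_{Q(R)}J^n)$, and $J$ is stable if $B_R(J)=J:_{Q(R)}J$. *)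

From HB Require Import structures.
From mathcomp Require Import all_boot all_order all_algebra.
Set Implicit Arguments. Unset Strict Implicit. Unset Printing Implicit Defensive.
Import Order.TTheory GRing.Theory.
Local Open Scope ring_scope.

Section CommAlg.
Variable R : comNzRingType.

Definition is_ideal (I : R -> Prop) : Prop :=
  [/\ I 0, (forall a b, I a -> I b -> I (a + b)) & (forall r a, I a -> I (r * a))].

Definition gen (S : R -> Prop) : R -> Prop :=
  fun r => forall I, is_ideal I -> (forall s, S s -> I s) -> I r.

Definition same_ideal (I J : R -> Prop) : Prop := forall r, I r <-> J r.
Definition subideal (I J : R -> Prop) : Prop := forall r, I r -> J r.

Fixpoint idpow (I : R -> Prop) (n : nat) : R -> Prop :=
  match n with
  | 0 => fun _ => True
  | n'.+1 => gen (fun r => exists a b, idpow I n' a /\ I b /\ r = a * b)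
  end.

Definition nzd (x : R) : Prop := forall y, x * y = 0 -> y = 0.

Definition regular_ideal (I : R -> Prop) : Prop := exists x, I x /\ nzd x.

Definition is_prime (P : R -> Prop) : Prop :=
  [/\ is_ideal P, ~ P 1 & forall a b, P (a * b) -> P a \/ P b].

Definition is_maximal (M : R -> Prop) : Prop :=
  [/\ is_ideal M, ~ M 1 &
      forall I, is_ideal I -> subideal M I -> same_ideal I M \/ I 1].

Definition local_with (m : R -> Prop) : Prop :=
  is_maximal m /\ forall M, is_maximal M -> same_ideal M m.

Definition noetherian : Prop :=
  forall I, is_ideal I -> exists s : seq R, same_ideal I (gen (fun r => r \in s)).

Definition prime_chain (p : nat -> R -> Prop) (n : nat) : Prop :=
  (forall i, (i <= n)%N -> is_prime (p i)) /\
  (forall i, (i < n)%N -> subideal (p i) (p i.+1) /\ exists r, p i.+1 r /\ ~ p i r).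

Definition krull_dim_eq (d : nat) : Prop :=
  (exists p, prime_chain p d) /\ ~ (exists p, prime_chain p d.+1).

Definition regular_seq (m : R -> Prop) (xs : seq R) : Prop :=
  (forall x, x \in xs -> m x) /\
  (forall i, (i < size xs)%N ->
     let P := gen (fun r => r \in take i xs) in
     forall y, P (nth 0 xs i * y) -> P y) /\
  ~ gen (fun r => r \in xs) 1.

(* Cohen-Macaulay local ring with maximal ideal m: Noetherian local and
   depth = dim, i.e. there is a regular sequence in m of length dim R
   (depth <= dim always holds) *)
Definition CM_local (m : R -> Prop) : Prop :=
  noetherian /\ local_with m /\
  exists d, krull_dim_eq d /\ exists xs, size xs = d /\ regular_seq m xs.

Definition principal_reduction (x : R) (I : R -> Prop) : Prop :=
  I x /\ exists n, same_ideal (idpow I n.+1) (fun r => exists y, idpow I n y /\ r = x * y).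

(* trace of a module N: image of N (x) Hom_R(N,R) -> R, i.e. the ideal
   generated by all f(n), f : N -> R linear, n in N *)
Definition trace_of (N : lmodType R) : R -> Prop :=
  gen (fun r => exists (f : {linear N -> R^o}) (n : N), r = f n).

Definition trace_ideal (I : R -> Prop) : Prop :=
  exists N : lmodType R, same_ideal I (trace_of N).

Definition int_closure (I : R -> Prop) : R -> Prop :=
  fun r => exists (n : nat) (a : nat -> R), (0 < n)%N /\
    (forall i, (1 <= i <= n)%N -> idpow I i (a i)) /\
    r ^+ n + \sum_(1 <= i < n.+1) a i * r ^+ (n - i) = 0.

(* Elements of Q(R) are fractions a/s with s a nonzerodivisor.
   (a/s) J^n subset J^n  iff  for all y in J^n, a y = s z for some z in J^n. *)
Definition colon_frac (J : R -> Prop) (n : nat) (a s : R) : Prop :=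
  forall y, idpow J n y -> exists z, idpow J n z /\ a * y = s * z.

(* J stable: B_R(J) = \bigcup_{n>0} (J^n :_Q J^n) equals J :_Q J *)
Definition stable (J : R -> Prop) : Prop :=
  forall a s, nzd s ->
    ((exists n, (0 < n)%N /\ colon_frac J n a s) <-> colon_frac J 1 a s).

End CommAlg.

(* Being finitely generated and integral over I, J has I as a reduction, and
   hence also (x): J^(N+1) = x J^N for some N > 0.  For j in J this gives
   (j/x) J^N <= J^N, so stability of J yields (j/x) J <= J, in particular
   (j/x) I <= R.  For a trace ideal, R :_Q I = I :_Q I, so j = (j/x) x lies
   in I. *)
From HB Require Import structures.
From mathcomp Require Import all_boot all_order all_algebra.
From mathcomp Require Import ring zify.
Set Implicit Arguments. Unset Strict Implicit. Unset Printing Implicit Defensive.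
Import GRing.Theory.
Local Open Scope ring_scope.

Section IdealArithmetic.
Variable R : comNzRingType.
Implicit Types (S T A B I L : R -> Prop) (a b r s u v x y z : R).

Lemma gen_is_ideal S : is_ideal (gen S).
Proof.
split=> [I [] //|a b Ha Hb I HI HS|r a Ha I HI HS]; case: (HI) => _ HD HM.
  by apply: HD; [apply: Ha | apply: Hb].
by apply: HM; apply: Ha.
Qed.

Lemma gen_base S s : S s -> gen S s.
Proof. by move=> Ss I _; apply. Qed.

Lemma gen_min S T : is_ideal T -> (forall s, S s -> T s) -> subideal (gen S) T.
Proof. by move=> HT HS r; apply. Qed.

Lemma ideal0 T : is_ideal T -> T 0.
Proof. by case. Qed.

Lemma idealD T a b : is_ideal T -> T a -> T b -> T (a + b).
Proof. by case=> _ + _; apply. Qed.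

Lemma idealM T r a : is_ideal T -> T a -> T (r * a).
Proof. by case=> _ _; apply. Qed.

Lemma idealMr T r a : is_ideal T -> T a -> T (a * r).
Proof. by rewrite mulrC; apply: idealM. Qed.

Lemma idealN T a : is_ideal T -> T a -> T (- a).
Proof. by rewrite -mulN1r; apply: idealM. Qed.

Lemma gen_mul_ind S B T : is_ideal T ->
  (forall u v, S u -> B v -> T (u * v)) ->
  forall u v, gen S u -> B v -> T (u * v).
Proof.
move=> HT HST u v Su Bv; apply: (Su (fun a => T (a * v))); last first.
  by move=> s Ss; apply: HST.
split=> [|a b Ha Hb|r a Ha]; first by rewrite mul0r; apply: ideal0.
  by rewrite mulrDl; apply: idealD.
by rewrite -mulrA; apply: idealM.
Qed.

Definition idmul A B : R -> Prop :=
  gen (fun r => exists a b, A a /\ B b /\ r = a * b).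

Definition idscale x A : R -> Prop := fun r => exists z, A z /\ r = x * z.

Lemma idmul_mem A B a b : A a -> B b -> idmul A B (a * b).
Proof. by move=> Aa Bb; apply: gen_base; exists a, b. Qed.

Lemma idmulS A A' B B' :
  subideal A A' -> subideal B B' -> subideal (idmul A B) (idmul A' B').
Proof.
move=> sAA' sBB'; apply: gen_min; first exact: gen_is_ideal.
by move=> _ [a [b [Aa [Bb ->]]]]; apply: idmul_mem; [apply: sAA' | apply: sBB'].
Qed.

Lemma idscale_ideal x A : is_ideal A -> is_ideal (idscale x A).
Proof.
move=> HA; split=> [|_ _ [z1 [A1 ->]] [z2 [A2 ->]]|r _ [z [Az ->]]].
- by exists 0; rewrite mulr0; split=> //; apply: ideal0.
- by exists (z1 + z2); rewrite mulrDr; split=> //; apply: idealD.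
- by exists (r * z); rewrite mulrCA; split=> //; apply: idealM.
Qed.

Lemma idpow_ideal L n : is_ideal (idpow L n).
Proof. by case: n => [|n] /=; [split | apply: gen_is_ideal]. Qed.

Lemma idpowS_mem L n a b : idpow L n a -> L b -> idpow L n.+1 (a * b).
Proof. exact: idmul_mem. Qed.

Lemma idpow1 L y : is_ideal L -> idpow L 1 y <-> L y.
Proof.
move=> HL; split=> [|Ly].
  by apply: (gen_min HL) => _ [a [b [_ [Lb ->]]]]; apply: idealM.
by rewrite -(mul1r y); exact: (idpowS_mem (n := 0) Logic.I Ly).
Qed.

Lemma idpow_sub L L' n : subideal L L' -> subideal (idpow L n) (idpow L' n).
Proof. by move=> sLL'; elim: n => [|n IHn] //=; apply: idmulS. Qed.

Lemma idpowD_mem L m n u v :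
  idpow L m u -> idpow L n v -> idpow L (m + n) (u * v).
Proof.
elim: n u v => [|n IHn] u v Lu Lv.
  by rewrite addn0; apply: idealMr => //; apply: idpow_ideal.
rewrite addnS mulrC; apply: (gen_mul_ind (idpow_ideal _ _) _ Lv Lu).
move=> _ w [c [d [Lc [Ld ->]]]] Lw; rewrite mulrAC [c * w]mulrC.
by apply: idpowS_mem => //; apply: IHn.
Qed.

Lemma idpowX_mem L s n : L s -> idpow L n (s ^+ n).
Proof. by move=> Ls; elim: n => [|n IHn] //; rewrite exprSr; apply: idpowS_mem. Qed.

Lemma idmul_idpowD_mem I L m n u v :
  idmul (idpow L m) I u -> idpow L n v -> idmul (idpow L (m + n)) I (u * v).
Proof.
move=> Hu Lv; apply: (gen_mul_ind (gen_is_ideal _) _ Hu Lv).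
move=> _ w [e [i [Le [Ii ->]]]] Lw; rewrite mulrAC.
by apply: idmul_mem => //; apply: idpowD_mem.
Qed.

Lemma idpow_scale_shift x J n :
  subideal (idpow J n.+1) (idscale x (idpow J n)) ->
  subideal (idpow J n.+2) (idscale x (idpow J n.+1)).
Proof.
move=> sJx; apply: gen_min; first exact/idscale_ideal/idpow_ideal.
move=> _ [a [b [Ja [Jb ->]]]]; have [z [Jz ->]] := sJx _ Ja.
by exists (z * b); rewrite mulrA; split=> //; apply: idpowS_mem.
Qed.

End IdealArithmetic.

Section Reduction.
Variable R : comNzRingType.
Implicit Types (I J L : R -> Prop) (r s u y : R) (sl : seq R).

Definition adjoin L s : R -> Prop := fun r => exists l t, L l /\ r = l + t * s.

Definition adjoin_seq L sl : R -> Prop := foldr (fun s L => adjoin L s) L sl.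

Definition reduction I L : Prop :=
  exists p, subideal (idpow L p.+1) (idmul (idpow L p) I).

Lemma adjoin_ideal L s : is_ideal L -> is_ideal (adjoin L s).
Proof.
move=> HL; split=> [|_ _ [l1 [t1 [L1 ->]]] [l2 [t2 [L2 ->]]]|r _ [l [t [Ll ->]]]].
- by exists 0, 0; split; [apply: ideal0 | ring].
- by exists (l1 + l2), (t1 + t2); split; [apply: idealD | ring].
- by exists (r * l), (r * t); split; [apply: idealM | ring].
Qed.

Lemma adjoin_sub L s : is_ideal L -> subideal L (adjoin L s).
Proof. by move=> HL l Ll; exists l, 0; split=> //; ring. Qed.

Lemma adjoin_mem L s : is_ideal L -> adjoin L s s.
Proof. by move=> HL; exists 0, 1; split; [apply: ideal0 | ring]. Qed.

Lemma idpow_adjoin_sub L s n : is_ideal L ->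
  subideal (idpow (adjoin L s) n)
    (gen (fun r => exists b y, (b <= n)%N /\ idpow L (n - b) y /\ r = y * s ^+ b)).
Proof.
move=> HL; elim: n => [|n IHn].
  by move=> r _; apply: gen_base; exists 0%N, r; rewrite mulr1.
apply: gen_min; first exact: gen_is_ideal.
move=> _ [a [w [La [Lw ->]]]]; apply: (gen_mul_ind (gen_is_ideal _) _ (IHn _ La) Lw).
move=> _ _ [b [y [le_bn [Ly ->]]]] [l [t [Ll ->]]].
have -> : y * s ^+ b * (l + t * s) = y * l * s ^+ b + t * (y * s ^+ b.+1)
  by rewrite exprS; ring.
apply: (idealD (gen_is_ideal _)).
  apply: gen_base; exists b, (y * l); split; first by lia.
  by rewrite subSn //; split=> //; apply: idpowS_mem.
by apply: (idealM _ (gen_is_ideal _)); apply: gen_base; exists b.+1, y.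
Qed.

Lemma reduction_shift I L p :
  subideal (idpow L p.+1) (idmul (idpow L p) I) ->
  forall c, subideal (idpow L (p.+1 + c)) (idmul (idpow L (p + c)) I).
Proof.
move=> redL; elim=> [|c IHc]; first by rewrite !addn0.
rewrite !addnS; apply: gen_min; first exact: gen_is_ideal.
move=> _ [a [d [La [Ld ->]]]]; rewrite -addn1.
by apply: idmul_idpowD_mem; [apply: IHc | rewrite -(mul1r d); apply: idpowS_mem].
Qed.

Lemma int_closure_exp_mem I L s : subideal I L -> L s -> int_closure I s ->
  exists2 k, (0 < k)%N & idmul (idpow L k.-1) I (s ^+ k).
Proof.
move=> sIL Ls [k [a [k_gt0 [Ia eq_s]]]]; exists k => //.
have -> : s ^+ k = - \sum_(1 <= i < k.+1) a i * s ^+ (k - i).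
  by apply/eqP; rewrite -addr_eq0 eq_s.
apply: (idealN (gen_is_ideal _)); rewrite big_nat_cond.
apply: (big_ind (idmul (idpow L k.-1) I)); first exact: (ideal0 (gen_is_ideal _)).
  by move=> u v Hu Hv; apply: (idealD (gen_is_ideal _)).
case=> [|i] /andP[/andP[_ lt_ik] _] //.
have := Ia i.+1 lt_ik => /(idmulS (idpow_sub (n := i) sIL) (fun _ => id)).
move/idmul_idpowD_mem => /(_ _ _ (idpowX_mem (k - i.+1) Ls)).
by have -> : (i + (k - i.+1) = k.-1)%N by lia.
Qed.

Lemma reduction_adjoin I L s : is_ideal L -> subideal I L -> int_closure I s ->
  reduction I L -> reduction I (adjoin L s).
Proof.
move=> HL sIL Is [p redL]; set L' := adjoin L s.
have sLL' : subideal L L' by apply: adjoin_sub.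
have L's : L' s by apply: adjoin_mem.
have [k k_gt0 L's_k] := int_closure_exp_mem (fun i Ii => sLL' _ (sIL _ Ii)) L's Is.
exists (p + k)%N => r /(idpow_adjoin_sub HL).
(* A generator y s^b absorbs I through y when b < k, and through s^k otherwise. *)
apply: gen_min; first exact: gen_is_ideal.
move=> _ [b [y [le_b [Ly ->]]]]; case: (ltnP b k) => [lt_bk | le_kb].
- have {}Ly : idpow L (p.+1 + (k - b)) y.
    by have <- : ((p + k).+1 - b = p.+1 + (k - b))%N by lia.
  have := reduction_shift redL Ly => /(idmulS (idpow_sub sLL') (fun _ => id)).
  move/idmul_idpowD_mem => /(_ _ _ (idpowX_mem b L's)).
  by have -> : (p + (k - b) + b = p + k)%N by lia.
- have L'y : idpow L' ((p + k).+1 - b + (b - k)) (y * s ^+ (b - k)).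
    by apply: idpowD_mem; [apply: idpow_sub Ly | apply: idpowX_mem].
  have := idmul_idpowD_mem L's_k L'y.
  have -> : (k.-1 + ((p + k).+1 - b + (b - k)) = p + k)%N by lia.
  by rewrite mulrCA -exprD subnKC.
Qed.

Lemma reduction_refl I : reduction I I.
Proof. by exists 0%N. Qed.

Lemma reduction_same_ideal I L L' :
  same_ideal L L' -> reduction I L -> reduction I L'.
Proof.
move=> eqLL' [p redL]; exists p => r /(idpow_sub (fun u => proj2 (eqLL' u))) /redL.
by apply: (idmulS (idpow_sub (fun u => proj1 (eqLL' u)))) => u.
Qed.

Lemma adjoin_seq_ideal L sl : is_ideal L -> is_ideal (adjoin_seq L sl).
Proof. by move=> HL; elim: sl => //= s sl IHsl; apply: adjoin_ideal. Qed.

Lemma adjoin_seq_sub L sl : is_ideal L -> subideal L (adjoin_seq L sl).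
Proof.
move=> HL; elim: sl => //= s sl IHsl r /IHsl.
exact/adjoin_sub/adjoin_seq_ideal.
Qed.

Lemma adjoin_seq_mem L sl s : is_ideal L -> s \in sl -> adjoin_seq L sl s.
Proof.
move=> HL; elim: sl => //= t sl IHsl; rewrite inE => /orP[/eqP-> | /IHsl].
  exact/adjoin_mem/adjoin_seq_ideal.
exact/adjoin_sub/adjoin_seq_ideal.
Qed.

Lemma adjoin_seq_min L J sl : is_ideal J -> subideal L J ->
  (forall s, s \in sl -> J s) -> subideal (adjoin_seq L sl) J.
Proof.
move=> HJ sLJ; elim: sl => //= s sl IHsl slJ _ [l [t [Ll ->]]].
apply: idealD => //.
  by apply: IHsl => // u u_sl; apply: slJ; rewrite inE u_sl orbT.
by apply: idealM => //; apply: slJ; rewrite inE eqxx.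
Qed.

Lemma reduction_adjoin_seq I L sl : is_ideal L -> subideal I L -> reduction I L ->
  (forall s, s \in sl -> int_closure I s) -> reduction I (adjoin_seq L sl).
Proof.
move=> HL sIL redL; elim: sl => //= s sl IHsl slI.
apply: reduction_adjoin; first exact: adjoin_seq_ideal.
- by move=> r /sIL; apply: adjoin_seq_sub.
- by apply: slI; rewrite inE eqxx.
- by apply: IHsl => u u_sl; apply: slI; rewrite inE u_sl orbT.
Qed.

Lemma reduction_int_closure_fg I J sl : is_ideal I -> is_ideal J ->
  subideal I J -> subideal J (int_closure I) ->
  same_ideal J (gen (fun r => r \in sl)) -> reduction I J.
Proof.
move=> HI HJ sIJ sJI eqJ.
have slJ s : s \in sl -> J s by move=> s_sl; apply/(eqJ s); apply: gen_base.
apply: (@reduction_same_ideal _ (adjoin_seq I sl)).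
  move=> r; split; first exact: adjoin_seq_min.
  move/(eqJ r); apply: gen_min => [|s]; first exact: adjoin_seq_ideal.
  exact: adjoin_seq_mem.
apply: reduction_adjoin_seq => //; first exact: reduction_refl.
by move=> s /slJ /sJI.
Qed.

End Reduction.

Section PrincipalReduction.
Variable R : comNzRingType.
Implicit Types (I J L T : R -> Prop) (a j s x y z : R).

Lemma reduction_idpow_sub I L p : is_ideal I ->
  subideal (idpow L p.+1) (idmul (idpow L p) I) ->
  forall c, subideal (idpow L (p.+1 + c)) (idmul (idpow L p) (idpow I c.+1)).
Proof.
move=> HI redL; elim=> [|c IHc].
  by rewrite addn0 => r /redL; apply: idmulS => // y /(idpow1 y HI).
rewrite addnS; apply: gen_min; first exact: gen_is_ideal.
move=> _ [w [d [Lw [Ld ->]]]]; apply: (gen_mul_ind (gen_is_ideal _) _ (IHc _ Lw) Ld).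
move=> _ d' [u [v [Lu [Iv ->]]]] Ld'; rewrite mulrAC.
apply: (gen_mul_ind (gen_is_ideal _) _ (redL _ (idpowS_mem Lu Ld')) Iv).
move=> _ v' [e [i [Le [Ii ->]]]] Iv'; rewrite -mulrA [i * v']mulrC.
by apply: idmul_mem => //; apply: idpowS_mem.
Qed.

Lemma principal_reduction_trans x I J : is_ideal I -> principal_reduction x I ->
  subideal I J -> reduction I J ->
  exists2 N, (0 < N)%N & subideal (idpow J N.+1) (idscale x (idpow J N)).
Proof.
move=> HI [_ [n eqIx]] sIJ [p redJ]; exists (p + n).+1 => //.
apply: idpow_scale_shift => r; rewrite -addSn => /(reduction_idpow_sub HI redJ).
apply: gen_min; first exact/idscale_ideal/idpow_ideal.
move=> _ [u [v [Ju [Iv ->]]]]; have [w [Iw ->]] := proj1 (eqIx v) Iv.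
exists (u * w); rewrite mulrCA; split=> //.
exact: idpowD_mem Ju (idpow_sub sIJ Iw).
Qed.

Lemma nzd_exp s n : nzd s -> nzd (s ^+ n).
Proof.
move=> nzd_s; elim: n => [|n IHn] y; first by rewrite expr0 mul1r.
by rewrite exprS -mulrA => /nzd_s /IHn.
Qed.

Lemma principal_reduction_nzd x I :
  regular_ideal I -> principal_reduction x I -> nzd x.
Proof.
move=> [y [Iy nzd_y]] [_ [n eqIx]] v xv0.
have [w [_ yw]] := proj1 (eqIx _) (idpowX_mem n.+1 Iy).
by apply: (nzd_exp (n := n.+1) nzd_y); rewrite yw mulrAC xv0 mul0r.
Qed.

(* R :_Q T = T :_Q T: for a linear form f : N -> R, (a/s) f is again one, so
   (a/s) f(n) lies in the trace of N. *)
Lemma trace_ideal_colon T a s : is_ideal T -> trace_ideal T -> nzd s ->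
  (forall y, T y -> exists z, a * y = s * z) ->
  forall y, T y -> exists2 z, T z & a * y = s * z.
Proof.
move=> HT [N eqT] nzd_s colT.
have colT_ideal : is_ideal (fun y => exists2 z, T z & a * y = s * z).
  split=> [|u v [z1 Tz1 E1] [z2 Tz2 E2]|r u [z Tz E]].
  - by exists 0; [apply: ideal0 | rewrite !mulr0].
  - by exists (z1 + z2); [apply: idealD | rewrite !mulrDr E1 E2].
  - by exists (r * z); [apply: idealM | rewrite mulrCA E mulrCA].
move=> y /(eqT y); apply: (gen_min colT_ideal) => _ [f [n ->]].
have f_col n' : exists z, a * f n' == s * z.
  have [|z /eqP] := colT (f n'); last by exists z.
  by apply/(eqT _); apply: gen_base; exists f, n'.
pose g n' := xchoose (f_col n').
have fg n' : a * f n' = s * g n' by apply/eqP/(xchooseP (f_col n')).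
have g_lin : linear (g : N -> R^o).
  move=> c u v; apply/eqP; rewrite -subr_eq0; apply/eqP/nzd_s.
  by rewrite mulrBr -fg linearP /GRing.scale /= mulrDr mulrCA !fg; ring.
pose gl : {linear N -> R^o} :=
  HB.pack (g : N -> R^o) (GRing.isLinear.Build R N R^o _ _ g_lin).
exists (g n); last exact: fg.
by apply/(eqT _); apply: gen_base; exists gl, n.
Qed.

Lemma stable_scale_colon x J N j : stable J -> nzd x -> (0 < N)%N ->
  subideal (idpow J N.+1) (idscale x (idpow J N)) -> J j -> colon_frac J 1 j x.
Proof.
move=> stJ nzd_x N_gt0 sJx Jj; apply/(stJ j x nzd_x); exists N; split=> // y Jy.
have [z [Jz E]] := sJx _ (idpowS_mem Jy Jj).
by exists z; rewrite mulrC.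
Qed.

End PrincipalReduction.

Theorem lemma6p3 (R : comNzRingType) (m : R -> Prop)
  (I J : R -> Prop) (x : R) :
  CM_local m -> krull_dim_eq R 1 ->
  is_ideal I -> regular_ideal I -> trace_ideal I -> principal_reduction x I ->
  is_ideal J -> trace_ideal J -> subideal I J -> subideal J (int_closure I) ->
  stable J ->
  same_ideal I J.
Proof.
move=> [noeth _] _ HI regI trI redxI HJ _ sIJ sJI stJ.
have nzd_x := principal_reduction_nzd regI redxI.
have [sl eqJ] := noeth J HJ.
have redIJ := reduction_int_closure_fg HI HJ sIJ sJI eqJ.
have [N N_gt0 sJx] := principal_reduction_trans HI redxI sIJ redIJ.
move=> j; split=> [/sIJ // | Jj].
have colJ := stable_scale_colon stJ nzd_x N_gt0 sJx Jj.
have colI i : I i -> exists z, j * i = x * z.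
  by move=> /sIJ /(idpow1 i HJ) /colJ [z [_ E]]; exists z.
have [z Iz jx] := trace_ideal_colon HI trI nzd_x colI redxI.1.
suff -> : j = z by [].
by apply/eqP; rewrite -subr_eq0; apply/eqP/nzd_x; rewrite mulrBr -jx mulrC subrr.
Qed.
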